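(* For every two hereditary class properties $\Pi_1$ and $\Pi_2$, \[(\Pi_1\cap\Pi_2)^+=\Pi_1^+\cap\Pi_2^+\qquad\text{and}\qquad(\Pi_1\cap\Pi_2)^\ast=\Pi_1^\ast\cap\Pi_2^\ast.\] In particular, for hereditary class properties $\Pi,\Lambda_1,\Lambda_2$: $\Pi=\Lambda_1^+=\Lambda_2^+$ implies $\Pi=(\Lambda_1\cap\Lambda_2)^+$, and $\Pi=\Lambda_1^\ast=\Lambda_2^\ast$ implies $\Pi=(\Lambda_1\cap\Lambda_2)^\ast$.
   Context: Graphs are finite and simple. A hereditary class is a class closed under isomorphism and induced subgraphs; a hereditary class property is a set $\Pi$ of hereditary classes such that $\mathscr C\in\Pi$, $\mathscr D$ hereditary, $\mathscr D\subseteq\mathscr C$ imply $\mathscr D\in\Pi$. For non-decreasing $f$ and positive integer $p$, $\mathscr C$ has an $f$-bounded $\Pi$-decomposition with parameter $p$ if there is $\mathscr D_p\in\Pi$ such that every $G\in\mathscr C$ has a partition $V_1,\dots,V_N$ of $V(G)$ with $N\le f(|G|)$ and $G[V_{i_1}\cup\dots\cup V_{i_p}]\in\mathscr D_p$ for all $i_1,\dots,i_p\in[N]$. $\Pi^+$ (resp. $\Pi^\ast$) is the set of hereditary classes that, for every positive integer $p$, have an $f$-bounded $\Pi$-decomposition with parameter $p$ for some constant function $f$ (resp. some non-decreasing $f$ with $f(n)=n^{o(1)}$). *)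

From mathcomp Require Import all_boot.
Set Implicit Arguments. Unset Strict Implicit. Unset Printing Implicit Defensive.

Record graph := Graph {
  gn : nat;
  gadj : rel 'I_gn;
  gsym : symmetric gadj;
  girr : irreflexive gadj }.
Arguments gadj : clear implicits.

Definition gsize (G : graph) : nat := gn G.

Definition isomorphic (G H : graph) : Prop :=
  exists f : 'I_(gn G) -> 'I_(gn H),
    bijective f /\ forall x y, gadj H (f x) (f y) = gadj G x y.

Definition induced_adj (G : graph) (X : {set 'I_(gn G)}) : rel 'I_#|X| :=
  fun i j => gadj G (enum_val i) (enum_val j).

Lemma induced_sym G X : symmetric (@induced_adj G X).
Proof. by move=> i j; rewrite /induced_adj gsym. Qed.

Lemma induced_irr G X : irreflexive (@induced_adj G X).
Proof. by move=> i; rewrite /induced_adj girr. Qed.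

Definition induced (G : graph) (X : {set 'I_(gn G)}) : graph :=
  Graph (@induced_sym G X) (@induced_irr G X).

Definition gclass := graph -> Prop.

Definition hereditary (C : gclass) : Prop :=
  (forall G H, isomorphic G H -> C G -> C H) /\
  (forall G (X : {set 'I_(gn G)}), C G -> C (@induced G X)).

Definition cprop := gclass -> Prop.

Definition hered_prop (Pi : cprop) : Prop :=
  (forall C, Pi C -> hereditary C) /\
  (forall C D, Pi C -> hereditary D -> (forall G, D G -> C G) -> Pi D).

Definition cprop_cap (P1 P2 : cprop) : cprop := fun C => P1 C /\ P2 C.

Definition cprop_eq (P1 P2 : cprop) : Prop := forall C, P1 C <-> P2 C.

(** A partition V_1,...,V_N of V(G) is encoded by the map sending each vertex
    to the index of its part (parts may be empty). *)
Definition part_union (G : graph) (N p : nat) (part : 'I_(gn G) -> 'I_N)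
    (idx : 'I_p -> 'I_N) : {set 'I_(gn G)} :=
  [set v | part v \in codom idx].

Definition has_decomp (Pi : cprop) (f : nat -> nat) (p : nat) (C : gclass) : Prop :=
  exists Dp : gclass, Pi Dp /\
    forall G, C G ->
      exists N : nat, N <= f (gsize G) /\
      exists part : 'I_(gn G) -> 'I_N,
        forall idx : 'I_p -> 'I_N, Dp (@induced G (part_union part idx)).

Definition nondecreasing (f : nat -> nat) : Prop := forall m n, m <= n -> f m <= f n.

(** f(n) = n^{o(1)}: for every k >= 1, eventually f(n)^k <= n
    (i.e. f(n) <= n^{1/k} for all large n). *)
Definition subpoly (f : nat -> nat) : Prop :=
  forall k, 0 < k -> exists n0, forall n, n0 <= n -> f n ^ k <= n.

Definition plus_op (Pi : cprop) : cprop := fun C =>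
  hereditary C /\
  forall p, 0 < p -> exists c : nat, has_decomp Pi (fun _ => c) p C.

Definition star_op (Pi : cprop) : cprop := fun C =>
  hereditary C /\
  forall p, 0 < p -> exists f : nat -> nat,
    nondecreasing f /\ subpoly f /\ has_decomp Pi f p C.

From mathcomp Require Import all_boot.
Set Implicit Arguments. Unset Strict Implicit. Unset Printing Implicit Defensive.

(* Every (Pi1 ∩ Pi2)-decomposition is both a Pi1- and a Pi2-decomposition.
   Conversely, given a Pi1-decomposition into N1 parts and a Pi2-decomposition
   into N2 parts, their common refinement has N1 N2 parts, and any p of its
   parts lie inside p parts of each; by heredity the union induces a graph of
   D1 ∩ D2, a class in Pi1 ∩ Pi2. A product of constants is constant and a
   product of two n^{o(1)} bounds is n^{o(1)}. *)

Section InducedOfInduced.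
Variables (G : graph) (X Y : {set 'I_(gn G)}).
Hypothesis sXY : X \subset Y.

Let XinY : {set 'I_#|Y|} := [set i | enum_val i \in X].

Let enum_valP_XinY (i : 'I_#|XinY|) : enum_val (enum_val i) \in X.
Proof. by have := enum_valP i; rewrite inE. Qed.

Let renum (i : 'I_#|XinY|) : 'I_#|X| :=
  enum_rank_in (enum_valP_XinY i) (enum_val (enum_val i)).

Let renumK i : enum_val (renum i) = enum_val (enum_val i).
Proof. by rewrite /renum enum_rankK_in // enum_valP_XinY. Qed.

Lemma induced_of_induced_iso :
  isomorphic (@induced (@induced G Y) XinY) (@induced G X).
Proof.
exists renum; split; last by move=> x y; rewrite /= /induced_adj /= !renumK.
have renum_inj : injective renum.
  by move=> x y /(congr1 enum_val); rewrite !renumK => /enum_val_inj/enum_val_inj.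
apply: (inj_card_bij renum_inj).
rewrite !card_ord -(card_imset XinY (@enum_val_inj _ (mem Y))).
apply/subset_leq_card/subsetP => x xX.
have xY : x \in Y by apply: (subsetP sXY).
apply/imsetP; exists (enum_rank_in xY x); last by rewrite enum_rankK_in.
by rewrite inE enum_rankK_in.
Qed.

End InducedOfInduced.

Lemma hereditary_induced_subset (D : gclass) G (X Y : {set 'I_(gn G)}) :
  hereditary D -> X \subset Y -> D (@induced G Y) -> D (@induced G X).
Proof.
move=> [D_iso D_induced] sXY DY.
exact: D_iso (induced_of_induced_iso sXY) (D_induced _ _ DY).
Qed.

Lemma hereditaryI (D1 D2 : gclass) : hereditary D1 -> hereditary D2 ->
  hereditary (fun G => D1 G /\ D2 G).
Proof.
move=> [iso1 ind1] [iso2 ind2]; split.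
  by move=> G H GH [D1G D2G]; split; [exact: iso1 GH D1G | exact: iso2 GH D2G].
by move=> G X [D1G D2G]; split; [exact: ind1 | exact: ind2].
Qed.

Lemma hered_prop_capI (Pi1 Pi2 : cprop) (D1 D2 : gclass) :
  hered_prop Pi1 -> hered_prop Pi2 -> Pi1 D1 -> Pi2 D2 ->
  cprop_cap Pi1 Pi2 (fun G => D1 G /\ D2 G).
Proof.
move=> [her1 down1] [her2 down2] PiD1 PiD2.
have her12 := hereditaryI (her1 _ PiD1) (her2 _ PiD2).
by split; [apply: down1 PiD1 _ _ | apply: down2 PiD2 _ _] => // G [].
Qed.

Lemma part_union_refine G N1 N2 p (part1 : 'I_(gn G) -> 'I_N1)
    (part2 : 'I_(gn G) -> 'I_N2) (idx : 'I_p -> 'I_#|{: 'I_N1 * 'I_N2}|) :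
  let part_union12 := part_union (fun v => enum_rank (part1 v, part2 v)) idx in
  part_union12 \subset part_union part1 (fun i => (enum_val (idx i)).1) /\
  part_union12 \subset part_union part2 (fun i => (enum_val (idx i)).2).
Proof.
by split; apply/subsetP => v; rewrite !inE => /codomP [i part_v];
  apply/codomP; exists i; rewrite -part_v enum_rankK.
Qed.

Lemma has_decompI (Pi1 Pi2 : cprop) f1 f2 p C :
  hered_prop Pi1 -> hered_prop Pi2 ->
  has_decomp Pi1 f1 p C -> has_decomp Pi2 f2 p C ->
  has_decomp (cprop_cap Pi1 Pi2) (fun n => f1 n * f2 n) p C.
Proof.
move=> hPi1 hPi2 [D1 [PiD1 dec1]] [D2 [PiD2 dec2]].
exists (fun G => D1 G /\ D2 G); split; first exact: hered_prop_capI.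
move=> G CG.
have [N1 [leN1 [part1 D1part1]]] := dec1 G CG.
have [N2 [leN2 [part2 D2part2]]] := dec2 G CG.
exists #|{: 'I_N1 * 'I_N2}|; split; first by rewrite card_prod !card_ord leq_mul.
exists (fun v => enum_rank (part1 v, part2 v)) => idx.
have [sub1 sub2] := part_union_refine part1 part2 idx.
split.
- exact: hereditary_induced_subset (hPi1.1 _ PiD1) sub1 (D1part1 _).
- exact: hereditary_induced_subset (hPi2.1 _ PiD2) sub2 (D2part2 _).
Qed.

Lemma has_decomp_mono (Pi1 Pi2 : cprop) f p C :
  (forall D, Pi1 D -> Pi2 D) -> has_decomp Pi1 f p C -> has_decomp Pi2 f p C.
Proof. by move=> sPi [D [PiD decD]]; exists D; split; first exact: sPi. Qed.

Lemma nondecreasingM f1 f2 : nondecreasing f1 -> nondecreasing f2 ->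
  nondecreasing (fun n => f1 n * f2 n).
Proof. by move=> nd1 nd2 m n le_mn; rewrite leq_mul ?nd1 ?nd2. Qed.

Lemma subpolyM f1 f2 : subpoly f1 -> subpoly f2 -> subpoly (fun n => f1 n * f2 n).
Proof.
move=> sp1 sp2 k k_gt0.
have k2_gt0 : 0 < k * 2 by rewrite muln_gt0 k_gt0.
have [n1 le1] := sp1 _ k2_gt0; have [n2 le2] := sp2 _ k2_gt0.
exists (maxn n1 n2) => n; rewrite geq_max => /andP [n1n n2n].
rewrite -(leq_exp2r _ _ (isT : 0 < 2)) -expnM expnMn expnS expn1.
by rewrite leq_mul ?le1 ?le2.
Qed.

Lemma plus_op_mono (Pi1 Pi2 : cprop) : (forall D, Pi1 D -> Pi2 D) ->
  forall C, plus_op Pi1 C -> plus_op Pi2 C.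
Proof.
move=> sPi C [herC dec]; split=> // p p_gt0.
by have [c decC] := dec p p_gt0; exists c; exact: has_decomp_mono decC.
Qed.

Lemma star_op_mono (Pi1 Pi2 : cprop) : (forall D, Pi1 D -> Pi2 D) ->
  forall C, star_op Pi1 C -> star_op Pi2 C.
Proof.
move=> sPi C [herC dec]; split=> // p p_gt0.
have [f [ndf [spf decC]]] := dec p p_gt0.
by exists f; do 2!split=> //; exact: has_decomp_mono decC.
Qed.

Section OperatorsOnIntersections.
Variables Pi1 Pi2 : cprop.
Hypotheses (hPi1 : hered_prop Pi1) (hPi2 : hered_prop Pi2).

Lemma plus_op_cap :
  cprop_eq (plus_op (cprop_cap Pi1 Pi2)) (cprop_cap (plus_op Pi1) (plus_op Pi2)).
Proof.
move=> C; split=> [C12 | [[herC dec1] [_ dec2]]].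
  by split; apply: plus_op_mono C12 => D [].
split=> // p p_gt0.
have [c1 decC1] := dec1 p p_gt0; have [c2 decC2] := dec2 p p_gt0.
by exists (c1 * c2); exact: has_decompI.
Qed.

Lemma star_op_cap :
  cprop_eq (star_op (cprop_cap Pi1 Pi2)) (cprop_cap (star_op Pi1) (star_op Pi2)).
Proof.
move=> C; split=> [C12 | [[herC dec1] [_ dec2]]].
  by split; apply: star_op_mono C12 => D [].
split=> // p p_gt0.
have [f1 [nd1 [sp1 decC1]]] := dec1 p p_gt0.
have [f2 [nd2 [sp2 decC2]]] := dec2 p p_gt0.
exists (fun n => f1 n * f2 n); split; first exact: nondecreasingM.
by split; [exact: subpolyM | exact: has_decompI].
Qed.

End OperatorsOnIntersections.

Lemma cprop_eq_op_cap (op : cprop -> cprop) (Pi L1 L2 : cprop) :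
  cprop_eq (op (cprop_cap L1 L2)) (cprop_cap (op L1) (op L2)) ->
  cprop_eq Pi (op L1) -> cprop_eq Pi (op L2) -> cprop_eq Pi (op (cprop_cap L1 L2)).
Proof.
move=> op_cap eq1 eq2 C; split=> [PiC | /op_cap [/eq1 //]].
by apply/op_cap; split; [apply/eq1 | apply/eq2].
Qed.

Theorem mainTheorem10 :
  (forall Pi1 Pi2 : cprop, hered_prop Pi1 -> hered_prop Pi2 ->
     cprop_eq (plus_op (cprop_cap Pi1 Pi2)) (cprop_cap (plus_op Pi1) (plus_op Pi2)) /\
     cprop_eq (star_op (cprop_cap Pi1 Pi2)) (cprop_cap (star_op Pi1) (star_op Pi2))) /\
  (forall Pi L1 L2 : cprop, hered_prop Pi -> hered_prop L1 -> hered_prop L2 ->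
     (cprop_eq Pi (plus_op L1) -> cprop_eq Pi (plus_op L2) ->
        cprop_eq Pi (plus_op (cprop_cap L1 L2))) /\
     (cprop_eq Pi (star_op L1) -> cprop_eq Pi (star_op L2) ->
        cprop_eq Pi (star_op (cprop_cap L1 L2)))).
Proof.
split=> [Pi1 Pi2 hPi1 hPi2 | Pi L1 L2 _ hL1 hL2].
  by split; [exact: plus_op_cap | exact: star_op_cap].
by split; apply: cprop_eq_op_cap; [exact: plus_op_cap | exact: star_op_cap].
Qed.
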